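(* Let $Q$ be a quiver, $C\subseteq\Bbbk Q$ a subcoalgebra, and $I$ a finitely generated right coideal of $C$. There exists a right coideal $I'\subseteq C$ containing $I$ and generated by a finite independent set of multipaths in $C$.
   Context: $\Bbbk$ is a field. The path coalgebra $\Bbbk Q$ has basis all paths of $Q$ (including trivial paths, identified with vertices), with $\Delta(p)=\sum_{xy=p}x\otimes y$ ($xy$ = concatenation) and $\varepsilon(p)=1$ if $p$ is trivial, $0$ otherwise. A right coideal of $C$ is a subspace $I$ with $\Delta(I)\subseteq I\otimes C$; for $x\in C$, $\langle x\rangle^C$ is the smallest right coideal of $C$ containing $x$, and a right coideal is generated by a set if it is the smallest right coideal containing it. A multipath is a nonzero linear combination of paths all sharing the same source and the same target; $M(C)$ is the set of multipaths in $C$. A subset $F\subseteq M(C)$ is independent if it is linearly independent and $\langle x\rangle^C\cap F=\{x\}$ for each $x\in F$. *)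

From HB Require Import structures.
From mathcomp Require Import all_boot all_algebra.
Set Implicit Arguments. Unset Strict Implicit. Unset Printing Implicit Defensive.
Import GRing.Theory.
Local Open Scope ring_scope.

(* A raw path is a pair (start vertex, list of arrows in walking order);
   it is a path of Q when the arrows chain up from the start vertex.
   The trivial path at v is (v, [::]).  Elements of k Q are finitely
   supported functions on paths (coordinates in the path basis);
   elements of k Q (x) k Q are functions on pairs of paths. *)

Section PathCoalgebra.
Variables (K : fieldType) (V A : eqType) (s t : A -> V).

Definition rawpath := (V * seq A)%type.

Fixpoint chain (v : V) (l : seq A) : bool :=
  if l is a :: l' then (s a == v) && chain (t a) l' else true.

Fixpoint pend (v : V) (l : seq A) : V :=
  if l is a :: l' then pend (t a) l' else v.

Definition is_path (p : rawpath) : bool := chain p.1 p.2.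
Definition psrc (p : rawpath) : V := p.1.
Definition ptgt (p : rawpath) : V := pend p.1 p.2.

(* concatenation x y: first x, then y (defined when ptgt x = psrc y) *)
Definition pconcat (p q : rawpath) : rawpath := (p.1, p.2 ++ q.2).
Definition composable (p q : rawpath) : bool :=
  [&& is_path p, is_path q & ptgt p == psrc q].

Definition vec := rawpath -> K.
Definition tvec := (rawpath * rawpath -> K)%type.

Definition vzero : vec := fun _ => 0.

Definition in_kQ (x : vec) : Prop :=
  (forall p, x p != 0 -> is_path p) /\
  exists r : seq rawpath, forall p, x p != 0 -> p \in r.

(* Delta(p) = sum_{x y = p} x (x) y, extended linearly:
   the coefficient of x (x) y in Delta(z) is the coefficient of x y in z. *)
Definition comul (x : vec) : tvec :=
  fun pq => if composable pq.1 pq.2 then x (pconcat pq.1 pq.2) else 0.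

Definition subspace (S : vec -> Prop) : Prop :=
  [/\ forall x, S x -> in_kQ x,
      S vzero,
      (forall x y, S x -> S y -> S (fun p => x p + y p)) &
      (forall (a : K) x, S x -> S (fun p => a * x p))].

Definition vsubset (S T : vec -> Prop) : Prop := forall x, S x -> T x.

Definition tensor (S T : vec -> Prop) (g : tvec) : Prop :=
  exists (n : nat) (xs ys : 'I_n -> vec),
    (forall i, S (xs i) /\ T (ys i)) /\
    forall pq, g pq = \sum_(i < n) xs i pq.1 * ys i pq.2.

Definition subcoalgebra (C : vec -> Prop) : Prop :=
  subspace C /\ forall x, C x -> tensor C C (comul x).

Definition right_coideal (C I : vec -> Prop) : Prop :=
  [/\ subspace I, vsubset I C & forall x, I x -> tensor I C (comul x)].

Definition generated_by (C : vec -> Prop) (F : seq vec) (I : vec -> Prop) : Prop :=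
  [/\ right_coideal C I,
      (forall i : 'I_(size F), I (nth vzero F i)) &
      (forall J, right_coideal C J -> (forall i : 'I_(size F), J (nth vzero F i)) -> vsubset I J)].

Definition fin_generated (C I : vec -> Prop) : Prop :=
  exists F : seq vec, generated_by C F I.

(* y \in <x>^C, i.e. y lies in the smallest right coideal of C containing x
   (= intersection of all right coideals of C containing x) *)
Definition in_cogen (C : vec -> Prop) (x y : vec) : Prop :=
  forall J, right_coideal C J -> J x -> J y.

Definition multipath (x : vec) : Prop :=
  [/\ in_kQ x, (exists p, x p != 0) &
      exists v w : V, forall p, x p != 0 -> psrc p = v /\ ptgt p = w].

Definition multipath_in (C : vec -> Prop) (x : vec) : Prop := C x /\ multipath x.

Definition lin_indep (F : seq vec) : Prop :=
  forall c : 'I_(size F) -> K,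
    (forall p, \sum_(i < size F) c i * nth vzero F i p = 0) -> forall i, c i = 0.

Definition independent (C : vec -> Prop) (F : seq vec) : Prop :=
  lin_indep F /\
  forall i j : 'I_(size F), in_cogen C (nth vzero F i) (nth vzero F j) -> i = j.

End PathCoalgebra.

From mathcomp Require Import all_boot all_algebra.
From mathcomp Require Import ring zify.
From Stdlib Require Import Classical FunctionalExtensionality.
Set Implicit Arguments. Unset Strict Implicit. Unset Printing Implicit Defensive.
Import GRing.Theory.

(* Restricting an element of C to the paths from v to w is a contraction of its
   double coproduct against the trivial paths at v and w, so C is closed under
   it and every generator of I is a finite sum of multipaths of C; these
   multipaths generate a right coideal containing I.  A finite family that is
   not independent has a member lying in the right coideal generated by the
   others (through a linear relation, or through a containment y in <x>^C);
   deleting it does not change the generated right coideal, and repeating this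
   ends with an independent family. *)

Section IndependentGenerators.
Local Open Scope ring_scope.
Variables (K : fieldType) (V A : eqType) (s t : A -> V).
Local Notation vec := (vec K V A).
Local Notation tvec := (tvec K V A).
Local Notation vzero := (@vzero K V A).

Lemma subspace_sum (J : vec -> Prop) (T : eqType) (r : seq T) (P : pred T)
    (c : T -> K) (f : T -> vec) :
  subspace s t J -> (forall i, i \in r -> P i -> J (f i)) ->
  J (fun p => \sum_(i <- r | P i) c i * f i p).
Proof.
move=> [_ J0 JD JZ]; elim: r => [|i r IH] Jf.
  suff -> : (fun p => \sum_(i <- [::] | P i) c i * f i p) = vzero by [].
  by apply: functional_extensionality => p; rewrite big_nil.
have Jr : J (fun p => \sum_(j <- r | P j) c j * f j p).
  by apply: IH => j jr; apply: Jf; rewrite inE jr orbT.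
case Pi: (P i).
- suff -> : (fun p => \sum_(j <- i :: r | P j) c j * f j p)
      = fun p => c i * f i p + \sum_(j <- r | P j) c j * f j p.
    by apply: JD => //; apply: JZ; apply: Jf; rewrite ?mem_head.
  by apply: functional_extensionality => p; rewrite big_cons Pi.
- suff -> : (fun p => \sum_(j <- i :: r | P j) c j * f j p)
      = fun p => \sum_(j <- r | P j) c j * f j p by [].
  by apply: functional_extensionality => p; rewrite big_cons Pi.
Qed.

Lemma subspace_dependent_nth (J : vec -> Prop) G (c : 'I_(size G) -> K) i :
  subspace s t J -> c i != 0 ->
  (forall p, \sum_(j < size G) c j * nth vzero G j p = 0) ->
  (forall j : 'I_(size G), j != i -> J (nth vzero G j)) -> J (nth vzero G i).
Proof.
move=> sJ ci0 relG JG; have [_ _ _ JZ] := sJ.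
suff -> : nth vzero G i
    = fun p => - (c i)^-1 * \sum_(j < size G | j != i) c j * nth vzero G j p.
  by apply: JZ; apply: subspace_sum => // j _; exact: JG.
apply: functional_extensionality => p.
move/eqP: (relG p); rewrite (bigD1 i) //= addrC addr_eq0 => /eqP ->.
by field.
Qed.

Lemma tensor_slice_l (S T : vec -> Prop) (g : tvec) q :
  subspace s t S -> tensor S T g -> S (fun p => g (p, q)).
Proof.
move=> sS [n [xs [ys [STxy Eg]]]].
suff -> : (fun p => g (p, q)) = fun p => \sum_(i < n) ys i q * xs i p.
  by apply: subspace_sum => // i _ _; case: (STxy i).
by apply: functional_extensionality => p; rewrite Eg; apply: eq_bigr => i _; rewrite mulrC.
Qed.

Lemma tensor_slice_r (S T : vec -> Prop) (g : tvec) q :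
  subspace s t T -> tensor S T g -> T (fun p => g (q, p)).
Proof.
move=> sT [n [xs [ys [STxy Eg]]]].
suff -> : (fun p => g (q, p)) = fun p => \sum_(i < n) xs i q * ys i p.
  by apply: subspace_sum => // i _ _; case: (STxy i).
by apply: functional_extensionality => p; rewrite Eg.
Qed.

Lemma tensor_add_pure (S T : vec -> Prop) (g : tvec) (y z : vec) :
  tensor S T g -> S y -> T z -> tensor S T (fun pq => g pq + y pq.1 * z pq.2).
Proof.
move=> [n [xs [ys [STxy Eg]]]] Sy Tz.
exists n.+1, (fun i => if unlift ord_max i is Some j then xs j else y),
             (fun i => if unlift ord_max i is Some j then ys j else z).
split=> [i|pq]; first by case: (unlift ord_max i).
rewrite big_ord_recr /= unlift_none Eg; congr (_ + _); apply: eq_bigr => i _.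
suff -> : widen_ord (leqnSn n) i = lift ord_max i by rewrite liftK.
by apply: val_inj; rewrite /= /bump leqNgt ltn_ord.
Qed.

(* Membership in [S (x) T] is detected by the left slices; this is what makes
   an intersection of right coideals a right coideal. *)
Lemma tensor_of_slices (S T : vec -> Prop) n (a b : 'I_n -> vec) (g : tvec) :
  subspace s t S -> subspace s t T -> (forall k, T (b k)) ->
  (forall pq, g pq = \sum_(k < n) a k pq.1 * b k pq.2) ->
  (forall q, S (fun p => g (p, q))) -> tensor S T g.
Proof.
move=> sS sT; have [_ _ SD SZ] := sS; have [_ _ TD TZ] := sT.
elim: n a b g => [|n IH] a b g Tb Eg Sg.
  by exists 0, a, b; split=> [[]|].
pose a' k := a (widen_ord (leqnSn n) k); pose b' k := b (widen_ord (leqnSn n) k).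
pose bm := b ord_max.
have [[q0 bq0]|bm0] := classic (exists q0, bm q0 != 0); last first.
  apply: (IH a' b') => [k|pq|//]; first exact: Tb.
  rewrite Eg big_ord_recr /=.
  suff -> : b ord_max pq.2 = 0 by rewrite mulr0 addr0.
  by apply/eqP/negPn/negP => ?; apply: bm0; exists pq.2.
(* Subtract y (x) bm, with y proportional to the slice at q0, to kill the
   last coordinate. *)
pose y p := (bm q0)^-1 * g (p, q0).
pose g' pq := g pq + (- (bm pq.2 / bm q0)) * g (pq.1, q0).
pose b'' k r := b' k r + (- (b' k q0 / bm q0)) * bm r.
have Sg' : tensor S T g'.
  apply: (IH a' b'') => [k|pq|q]; first by apply: TD; [exact: Tb | apply: TZ; exact: Tb].
  - rewrite /g' /b'' !Eg !big_ord_recr /= -/bm.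
    under [RHS]eq_bigr do rewrite mulrDr.
    rewrite big_split /=.
    have -> : \sum_(k < n) a' k pq.1 * (- (b' k q0 / bm q0) * bm pq.2)
        = - (bm pq.2 / bm q0) * \sum_(k < n) a' k pq.1 * b' k q0.
      by rewrite mulr_sumr; apply: eq_bigr => k _; ring.
    by field.
  - by apply: SD => /=; [exact: Sg | exact: SZ (Sg q0)].
suff <- : (fun pq => g' pq + y pq.1 * bm pq.2) = g.
  exact: tensor_add_pure Sg' (SZ _ _ (Sg q0)) (Tb ord_max).
by apply: functional_extensionality => pq; rewrite /g' /y; field.
Qed.

Definition forall_nth (P : vec -> Prop) (F : seq vec) : Prop :=
  forall j, (j < size F)%N -> P (nth vzero F j).

Lemma forall_nthP (P : vec -> Prop) F :
  forall_nth P F <-> forall i : 'I_(size F), P (nth vzero F i).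
Proof. by split=> PF => [i|j jF]; [exact: PF | exact: (PF (Ordinal jF))]. Qed.

Lemma forall_nth_cons (P : vec -> Prop) x F :
  forall_nth P (x :: F) <-> P x /\ forall_nth P F.
Proof.
split=> [PxF|[Px PF] [|j] //]; last exact: PF.
by split=> [|j]; [exact: (PxF 0%N) | exact: (PxF j.+1)].
Qed.

Lemma forall_nth_cat (P : vec -> Prop) F G :
  forall_nth P (F ++ G) <-> forall_nth P F /\ forall_nth P G.
Proof.
split=> [PFG|[PF PG] j]; last first.
  rewrite size_cat nth_cat; case: (ltnP j (size F)) => [jF _|jF jFG]; first exact: PF.
  by apply: PG; lia.
split=> j jF.
  by have := PFG j; rewrite size_cat nth_cat jF; apply; lia.
have := PFG (size F + j)%N; rewrite size_cat nth_cat (ltnNge _ (size F)) leq_addr addKn.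
by apply; lia.
Qed.

Lemma forall_nth_map (P : vec -> Prop) (T : eqType) (f : T -> vec) (L : seq T) :
  forall_nth P (map f L) <-> (forall a, a \in L -> P (f a)).
Proof.
split=> [PfL a aL|PfL j]; last first.
  case: L PfL => [//|a0 L] PfL; rewrite size_map => jL.
  by rewrite (nth_map a0) //; apply/PfL/mem_nth.
have := PfL (index a L); rewrite size_map index_mem (nth_map a) ?index_mem //.
by rewrite nth_index //; apply.
Qed.

Definition delete_nth (T : Type) (k : nat) (l : seq T) : seq T :=
  take k l ++ drop k.+1 l.

Lemma size_delete_nth (T : Type) k (l : seq T) :
  (k < size l)%N -> size (delete_nth k l) = (size l).-1.
Proof. by move=> kl; rewrite size_cat size_take size_drop kl; lia. Qed.

Lemma nth_delete_nth (T : Type) (x0 : T) k (l : seq T) j :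
  (k < size l)%N ->
  nth x0 (delete_nth k l) j = nth x0 l (if (j < k)%N then j else j.+1).
Proof.
move=> kl; rewrite nth_cat size_take kl.
by case: ltnP => [jk|kj]; [rewrite nth_take | rewrite nth_drop; congr nth; lia].
Qed.

Lemma forall_nth_delete_nth (P : vec -> Prop) k G : (k < size G)%N ->
  forall_nth P (delete_nth k G) <->
  (forall m, (m < size G)%N -> m != k -> P (nth vzero G m)).
Proof.
move=> kG; split=> [PG m mG mk|PG j]; last first.
  rewrite size_delete_nth // nth_delete_nth // => jG.
  by case: (ltnP j k) => jk; apply: PG; lia.
case: (ltnP m k) => [mk'|km].
  by have := PG m; rewrite size_delete_nth // nth_delete_nth // mk'; apply; lia.
have := PG m.-1; rewrite size_delete_nth // nth_delete_nth // ifF ?prednK; try lia.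
by apply; lia.
Qed.

Definition restrict_ends (vw : V * V) (x : vec) : vec :=
  fun p => if is_path s t p && ((psrc p, ptgt t p) == vw) then x p else 0.

Lemma restrict_endsE vw x p :
  restrict_ends vw x p
  = comul s t (fun p' => comul s t x (p', (vw.2, [::]))) ((vw.1, [::]), p).
Proof.
case: vw => v w; case: p => u l.
rewrite /restrict_ends /comul /composable /is_path /ptgt /psrc /pconcat /= cats0.
have [<-|vu] := eqVneq v u; first by rewrite andbT xpair_eqE eqxx /=; case: chain.
by rewrite xpair_eqE eq_sym (negbTE vu) /= !andbF.
Qed.

Section Subcoalgebra.
Variable C : vec -> Prop.
Hypothesis C_subcoalg : subcoalgebra s t C.

Lemma subcoalgebra_right_coideal : right_coideal s t C C.
Proof. by case: C_subcoalg => sC comulC; split. Qed.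

Lemma subcoalgebra_restrict_ends vw x : C x -> C (restrict_ends vw x).
Proof.
move=> Cx; have [sC comulC] := C_subcoalg.
have Cy : C (fun p' => comul s t x (p', (vw.2, [::]))).
  exact: tensor_slice_l _ sC (comulC x Cx).
suff -> : restrict_ends vw x
    = fun p => comul s t (fun p' => comul s t x (p', (vw.2, [::]))) ((vw.1, [::]), p).
  exact: tensor_slice_r _ sC (comulC _ Cy).
by apply: functional_extensionality => p; rewrite restrict_endsE.
Qed.

Lemma restrict_ends_multipath x p0 : C x -> x p0 != 0 ->
  multipath_in s t C (restrict_ends (psrc p0, ptgt t p0) x).
Proof.
move=> Cx xp0; have [[kQC _ _ _] _] := C_subcoalg.
have [pathx _] := kQC x Cx.
split; first exact: subcoalgebra_restrict_ends.
split; first exact/kQC/subcoalgebra_restrict_ends.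
  by exists p0; rewrite /restrict_ends pathx // eqxx.
exists (psrc p0), (ptgt t p0) => p; rewrite /restrict_ends.
by case: ifP => [/andP [_ /eqP [-> ->]]|]; last rewrite eqxx.
Qed.

Lemma multipath_decomposition x : C x ->
  exists L : seq (V * V),
    (forall vw, vw \in L -> multipath_in s t C (restrict_ends vw x)) /\
    forall p, x p = \sum_(vw <- L) restrict_ends vw x p.
Proof.
move=> Cx; have [[kQC _ _ _] _] := C_subcoalg.
have [pathx [r xr]] := kQC x Cx.
exists (undup [seq (psrc p, ptgt t p) | p <- r & x p != 0]); split.
  move=> vw; rewrite mem_undup => /mapP [p0]; rewrite mem_filter => /andP [xp0 _] ->.
  exact: restrict_ends_multipath.
move=> p; have [xp0|xp0] := eqVneq (x p) 0.
  by rewrite xp0 big1 // => vw _; rewrite /restrict_ends xp0; case: ifP.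
have Lp : (psrc p, ptgt t p) \in undup [seq (psrc p, ptgt t p) | p <- r & x p != 0].
  by rewrite mem_undup; apply: map_f; rewrite mem_filter xp0 xr.
rewrite (bigD1_seq _ Lp (undup_uniq _)) /= big1 ?addr0.
  by rewrite /restrict_ends pathx // eqxx.
by move=> vw vwp; rewrite /restrict_ends eq_sym (negbTE vwp) andbF.
Qed.

Definition cogenerated (F : seq vec) (y : vec) : Prop :=
  forall J, right_coideal s t C J -> forall_nth J F -> J y.

Lemma cogenerated_nth F : forall_nth (cogenerated F) F.
Proof. by move=> j jF J _ JF; exact: JF. Qed.

Lemma cogenerated_trans F G y :
  forall_nth (cogenerated F) G -> cogenerated G y -> cogenerated F y.
Proof. by move=> FG Gy J rcJ JF; apply: Gy => // j jG; exact: FG. Qed.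

Lemma cogenerated_right_coideal F :
  forall_nth C F -> right_coideal s t C (cogenerated F).
Proof.
move=> CF; have [sC comulC] := C_subcoalg; have rcC := subcoalgebra_right_coideal.
have cogenC y : cogenerated F y -> C y by move/(_ C rcC CF).
have [kQC _ _ _] := sC.
have sF : subspace s t (cogenerated F).
  split=> [y /cogenC /kQC //| J [[_ J0 _ _] _ _] _ //| y z Fy Fz J rcJ JF | a y Fy J rcJ JF].
  - by have [[_ _ JD _] _ _] := rcJ; apply: JD; [exact: Fy | exact: Fz].
  - by have [[_ _ _ JZ] _ _] := rcJ; apply: JZ; exact: Fy.
split=> [//|y /cogenC //|y Fy].
have [n [a [b [Cab Eg]]]] := comulC y (cogenC y Fy).
apply: (tensor_of_slices (a := a) (b := b)) => // [k|q J rcJ JF].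
  by case: (Cab k).
by have [sJ _ comulJ] := rcJ; exact: tensor_slice_l _ sJ (comulJ y (Fy J rcJ JF)).
Qed.

Lemma generated_by_cogenerated F :
  forall_nth C F -> generated_by s t C F (cogenerated F).
Proof.
move=> CF; split; first exact: cogenerated_right_coideal.
  by move=> i; apply: cogenerated_nth.
by move=> J rcJ /forall_nthP JF y Fy; exact: Fy.
Qed.

Lemma multipath_cover F0 : forall_nth C F0 ->
  exists G, forall_nth (multipath_in s t C) G /\ forall_nth (cogenerated G) F0.
Proof.
elim: F0 => [|x F0 IH]; first by exists [::].
move=> /forall_nth_cons [Cx /IH [G [multG GF0]]].
have [L [multL Ex]] := multipath_decomposition Cx.
exists ([seq restrict_ends vw x | vw <- L] ++ G); split.
  by apply/forall_nth_cat; split=> //; apply/forall_nth_map.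
apply/forall_nth_cons; split=> [J rcJ /forall_nth_cat [/forall_nth_map JM _]|].
  have [sJ _ _] := rcJ.
  suff -> : x = fun p => \sum_(vw <- L | true) 1 * restrict_ends vw x p.
    by apply: subspace_sum => // vw /JM.
  by apply: functional_extensionality => p; rewrite Ex; apply: eq_bigr => vw _; rewrite mul1r.
move=> j jF0 J rcJ /forall_nth_cat [_ JG]; exact: GF0.
Qed.

Lemma not_independent_redundant G : ~ independent s t C G ->
  exists2 k, (k < size G)%N & cogenerated (delete_nth k G) (nth vzero G k).
Proof.
move=> /not_and_or [nlin|/not_all_ex_not [i /not_all_ex_not [j ncogen]]].
  have [c nc] := not_all_ex_not _ _ nlin.
  have [relG /not_all_ex_not [i ci0]] := imply_to_and _ _ nc.
  exists i => //; move=> J [sJ _ _] /(forall_nth_delete_nth _ (ltn_ord i)) JG.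
  apply: subspace_dependent_nth sJ (introN eqP ci0) relG _ => j ji.
  by apply: JG => //; rewrite val_eqE.
have [ij neq] := imply_to_and _ _ ncogen.
exists j => //; move=> J rcJ /(forall_nth_delete_nth _ (ltn_ord j)) JG.
by apply: ij rcJ _; apply: JG => //; apply/eqP => /val_inj.
Qed.

Lemma independent_subfamily G : forall_nth (multipath_in s t C) G ->
  exists F, [/\ forall_nth (multipath_in s t C) F, independent s t C F
              & forall_nth (cogenerated F) G].
Proof.
have [n] := ubnP (size G); elim: n G => // n IH G /ltnSE sizeG multG.
have [indG|/not_independent_redundant [k kG redk]] := classic (independent s t C G).
  by exists G; split=> //; exact: cogenerated_nth.
have multG' := (forall_nth_delete_nth _ kG).2 (fun m mG _ => multG m mG).
have [|F [multF indF G'F]] := IH _ _ multG'; first by rewrite size_delete_nth //; lia.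
exists F; split=> // m mG; have [->|mk] := eqVneq m k.
  exact: cogenerated_trans G'F redk.
exact: (forall_nth_delete_nth _ kG).1 G'F m mG mk.
Qed.

End Subcoalgebra.
End IndependentGenerators.

Theorem corollary4p21 (K : fieldType) (V A : eqType) (s t : A -> V)
    (C I : vec K V A -> Prop) :
  subcoalgebra s t C ->
  fin_generated s t C I ->
  exists F : seq (vec K V A),
    (forall i : 'I_(size F), multipath_in s t C (nth (@vzero K V A) F i)) /\
    independent s t C F /\
    exists I' : vec K V A -> Prop, generated_by s t C F I' /\ vsubset I I'.
Proof.
move=> subC [F0 [rcI IF0 minI]].
have CF0 : forall_nth C F0.
  by apply/forall_nthP => i; have [_ IC _] := rcI; exact/IC/IF0.
have [G [multG GF0]] := multipath_cover subC CF0.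
have [F [multF indF FG]] := independent_subfamily multG.
have CF : forall_nth C F by move=> j /multF [].
exists F; split; first exact/forall_nthP.
split=> //; exists (cogenerated s t C F); split; first exact: generated_by_cogenerated.
apply: minI; first exact: cogenerated_right_coideal.
by move=> i; apply: cogenerated_trans FG (GF0 i (ltn_ord i)).
Qed.
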